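(* Let $R$ be a ring with no right subprojective middle class. Then every right $R$-module is subprojective extension-reflecting.
   Context: For right $R$-modules $X,Y$, $X\in \underline{\mathfrak{Pr}}^{-1}(Y)$ means: for every epimorphism $g\colon B\to X$ and every homomorphism $f\colon Y\to X$ there exists $h\colon Y\to B$ with $gh=f$; $\underline{\mathfrak{Pr}}^{-1}(Y)$ is the class of all such $X$. A module $N$ is p-indigent if $\underline{\mathfrak{Pr}}^{-1}(N)$ equals the class of projective modules. $R$ has no right subprojective middle class if every right $R$-module is either projective or p-indigent. $M$ is subprojective extension-reflecting if for every short exact sequence $0\to A\to B\to C\to 0$, $M\in \underline{\mathfrak{Pr}}^{-1}(A)\cap \underline{\mathfrak{Pr}}^{-1}(C)$ implies $M\in \underline{\mathfrak{Pr}}^{-1}(B)$. *)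

(* Right R-modules are modelled as left modules over the
   converse ring R^c (lmodType R^c); homomorphisms are R^c-linear maps. *)
From HB Require Import structures.
From mathcomp Require Import all_boot all_algebra.
Set Implicit Arguments. Unset Strict Implicit. Unset Printing Implicit Defensive.
Import GRing.Theory.
Local Open Scope ring_scope.

Section RightModules.
Variable R : nzRingType.

Definition rmodType := lmodType R^c.

Definition epi (U V : rmodType) (g : {linear U -> V}) : Prop :=
  forall v : V, exists u : U, g u = v.

Definition subproj_in (X Y : rmodType) : Prop :=
  forall (B : rmodType) (g : {linear B -> X}) (f : {linear Y -> X}),
    epi g -> exists h : {linear Y -> B}, forall y : Y, g (h y) = f y.

Definition projective (P : rmodType) : Prop :=
  forall (B C : rmodType) (g : {linear B -> C}) (f : {linear P -> C}),
    epi g -> exists h : {linear P -> B}, forall y : P, g (h y) = f y.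

Definition p_indigent (N : rmodType) : Prop :=
  forall X : rmodType, subproj_in X N <-> projective X.

Definition no_right_subprojective_middle_class : Prop :=
  forall M : rmodType, projective M \/ p_indigent M.

Definition short_exact (A B C : rmodType) (i : {linear A -> B}) (p : {linear B -> C}) : Prop :=
  injective i /\ epi p /\ (forall b : B, p b = 0 <-> exists a : A, i a = b).

Definition subproj_ext_reflecting (M : rmodType) : Prop :=
  forall (A B C : rmodType) (i : {linear A -> B}) (p : {linear B -> C}),
    short_exact i p -> subproj_in M A -> subproj_in M C -> subproj_in M B.

End RightModules.

(** Without a middle class, [M \in Pr^-1(Y)] forces [M] or [Y] to be projective:
    if [Y] is not projective it is p-indigent. Hence either [M] is projective,
    and a projective module lies in every [Pr^-1(Y)], or both ends [A] and [C]
    of the sequence are projective. In the latter case the sequence splits, so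
    [B ~ A (+) C] is projective, and every module lies in [Pr^-1] of a
    projective module. *)
From HB Require Import structures.
From mathcomp Require Import all_boot all_algebra.
Set Implicit Arguments. Unset Strict Implicit. Unset Printing Implicit Defensive.
Import GRing.Theory.
Local Open Scope ring_scope.

Section SplitRetraction.
Variables (R : nzRingType) (A B C : rmodType R).
Variables (i : {linear A -> B}) (p : {linear B -> C}) (s : {linear C -> B}).
Hypothesis i_inj : injective i.
Hypothesis ker_sub_im : forall b : B, p b = 0 -> exists a : A, i a = b.
Hypothesis sK : cancel s p.

Lemma retraction_exists (b : B) : exists a : A, i a == b - s (p b).
Proof.
have [|a <-] := @ker_sub_im (b - s (p b)); first by rewrite linearB /= sK subrr.
by exists a.
Qed.

Let r (b : B) : A := xchoose (retraction_exists b).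

Let rP (b : B) : i (r b) = b - s (p b).
Proof. exact/eqP/(xchooseP (retraction_exists b)). Qed.

Let r_is_linear : linear r.
Proof.
move=> a x y; apply: i_inj.
by rewrite rP !linearP /= !rP scalerN scalerBr addrACA.
Qed.

Definition split_retraction : {linear B -> A} :=
  HB.pack r (GRing.isLinear.Build R^c B A *:%R r r_is_linear).

Lemma split_retractionP (b : B) : i (split_retraction b) = b - s (p b).
Proof. exact: rP. Qed.

End SplitRetraction.

Section Projectivity.
Variable R : nzRingType.

Lemma projective_ext (A B C : rmodType R) (i : {linear A -> B})
    (p : {linear B -> C}) :
  short_exact i p -> projective A -> projective C -> projective B.
Proof.
move=> [i_inj [p_epi ker_im]] PA PC X Y g f g_epi.
have [s sK] := PC B C p idfun p_epi.
have [hA HA] := PA X Y g (f \o i)%FUN g_epi.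
have [hC HC] := PC X Y g (f \o s)%FUN g_epi.
pose r := split_retraction i_inj (fun b => (ker_im b).1) sK.
have rP : forall b, i (r b) = b - s (p b) := split_retractionP _ _ _.
(* [b = i (r b) + s (p b)], so lifts of [f \o i] and [f \o s] combine to a lift of [f]. *)
exists ((hA \o r) \+ (hC \o p))%FUN => b /=.
by rewrite linearD /= HA HC /= rP -raddfD subrK.
Qed.

Lemma projective_subproj_in_l (X Y : rmodType R) :
  projective X -> subproj_in X Y.
Proof.
move=> PX B g f g_epi; have [s sK] := PX B X g idfun g_epi.
by exists (s \o f)%FUN => y /=; rewrite sK.
Qed.

Lemma projective_subproj_in_r (X Y : rmodType R) :
  projective Y -> subproj_in X Y.
Proof. by move=> PY B g f; apply: PY. Qed.

Lemma subproj_in_projective (X Y : rmodType R) :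
  no_right_subprojective_middle_class R ->
  subproj_in X Y -> projective X \/ projective Y.
Proof.
move=> noMid XY; have [PY|Yind] := noMid Y; first by right.
by left; apply/Yind.
Qed.

End Projectivity.

Theorem mainTheorem19 (R : nzRingType) :
  no_right_subprojective_middle_class R ->
  forall M : rmodType R, subproj_ext_reflecting M.
Proof.
move=> noMid M A B C i p ses MA MC.
have [PM|PA] := subproj_in_projective noMid MA.
  exact: projective_subproj_in_l.
have [PM|PC] := subproj_in_projective noMid MC.
  exact: projective_subproj_in_l.
exact/projective_subproj_in_r/(projective_ext ses PA PC).
Qed.
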